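(* Let $T$ be a compactum and $\mathbf a,\mathbf b,\mathbf c,\mathbf d$ entourages of $T$. If $\mathbf a-\mathbf b-\mathbf c\ (4)$, $\mathbf a\#\mathbf d$ and $\mathbf c\#\mathbf d$, then $\mathbf b\#\mathbf d$.
   Context: Let $T$ be a compact Hausdorff space, $S^2T$ the space of unordered pairs of points of $T$ (diagonal allowed), $\Delta^2T$ the diagonal. An entourage is a neighborhood of $\Delta^2T$ in $S^2T$. For an entourage $\mathbf e$, $\Delta_{\mathbf e}$ is the graph distance on $T$ for the graph with vertex set $T$ and edges the pairs in $\mathbf e$; for sets, $\Delta_{\mathbf e}(a,b)=\inf$ over $x\in a,y\in b$. A set is $\mathbf e$-small if its $\Delta_{\mathbf e}$-diameter is $\le1$. Entourages $\mathbf a,\mathbf b$ are unlinked ($\mathbf a\bowtie\mathbf b$) if $T=a\cup b$ for an $\mathbf a$-small $a$ and a $\mathbf b$-small $b$; otherwise linked ($\mathbf a\#\mathbf b$). Standing conventions: every entourage considered is linked with itself and $T$ has $\Delta_{\mathbf a}$-diameter $>4$. For $\mathbf a\bowtie\mathbf b$, $\mathrm{sh}_{\mathbf a}\mathbf b=\bigcap\{a: a\ \mathbf a\text{-small},\ T\setminus a\ \mathbf b\text{-small}\}$. $\mathbf a-\mathbf b-\mathbf c\ (k)$ means $\mathbf a\bowtie\mathbf b\bowtie\mathbf c$ and $\Delta_{\mathbf b}(\mathrm{sh}_{\mathbf b}\mathbf a,\mathrm{sh}_{\mathbf b}\mathbf c)>k$. *)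

From Stdlib Require Import List.

Set Implicit Arguments.

Record topology (T : Type) := Topology {
  is_open : (T -> Prop) -> Prop;
  open_full : is_open (fun _ => True);
  open_union : forall F : (T -> Prop) -> Prop,
      (forall U, F U -> is_open U) -> is_open (fun x => exists U, F U /\ U x);
  open_inter : forall U V, is_open U -> is_open V -> is_open (fun x => U x /\ V x)
}.

Definition compact (T : Type) (tau : topology T) : Prop :=
  forall F : (T -> Prop) -> Prop,
    (forall U, F U -> is_open tau U) ->
    (forall x, exists U, F U /\ U x) ->
    exists l : list (T -> Prop),
      (forall U, In U l -> F U) /\ (forall x, exists U, In U l /\ U x).

Definition hausdorff (T : Type) (tau : topology T) : Prop :=
  forall x y : T, x <> y ->
    exists U V, is_open tau U /\ is_open tau V /\ U x /\ V y /\
                (forall z, U z -> V z -> False).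

Definition prod_open (T : Type) (tau : topology T) (W : T -> T -> Prop) : Prop :=
  forall x y, W x y -> exists U V, is_open tau U /\ is_open tau V /\ U x /\ V y /\
    (forall u v, U u -> V v -> W u v).

(* A subset of S^2 T (unordered pairs, diagonal allowed) is represented by the
   symmetric relation of pairs (x,y) with {x,y} in it.  S^2 T carries the quotient
   topology of T x T, so its open sets are exactly the symmetric open relations.
   An entourage is a neighbourhood of the diagonal Delta^2 T in S^2 T. *)
Definition symmetric (T : Type) (e : T -> T -> Prop) : Prop :=
  forall x y, e x y -> e y x.

Definition entourage (T : Type) (tau : topology T) (e : T -> T -> Prop) : Prop :=
  symmetric e /\
  exists W : T -> T -> Prop,
    symmetric W /\ prod_open tau W /\ (forall x, W x x) /\ (forall x y, W x y -> e x y).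

(* within e n x y  <->  Delta_e(x,y) <= n  (there is an e-path of length <= n). *)
Inductive within (T : Type) (e : T -> T -> Prop) : nat -> T -> T -> Prop :=
| within_refl : forall n x, within e n x x
| within_step : forall n x y z, e x y -> within e n y z -> within e (S n) x z.

(* Delta_e(A,B) > k, with Delta_e(A,B) = inf over x in A, y in B (inf of empty = oo). *)
Definition set_dist_gt (T : Type) (e : T -> T -> Prop) (A B : T -> Prop) (k : nat) : Prop :=
  forall x y, A x -> B y -> ~ within e k x y.

Definition small (T : Type) (e : T -> T -> Prop) (A : T -> Prop) : Prop :=
  forall x y, A x -> A y -> within e 1 x y.

Definition diam_gt (T : Type) (e : T -> T -> Prop) (n : nat) : Prop :=
  exists x y, ~ within e n x y.

Definition unlinked (T : Type) (a b : T -> T -> Prop) : Prop :=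
  exists A B : T -> Prop, (forall x, A x \/ B x) /\ small a A /\ small b B.

Definition linked (T : Type) (a b : T -> T -> Prop) : Prop := ~ unlinked a b.

Definition sh (T : Type) (a b : T -> T -> Prop) : T -> Prop :=
  fun x => forall A : T -> Prop, small a A -> small b (fun y => ~ A y) -> A x.

Definition chain3 (T : Type) (a b c : T -> T -> Prop) (k : nat) : Prop :=
  unlinked a b /\ unlinked b c /\ set_dist_gt b (sh b a) (sh b c) k.

Definition standing (T : Type) (tau : topology T) (e : T -> T -> Prop) : Prop :=
  entourage tau e /\ linked e e /\ diam_gt e 4.

(* Points of sh_b a lie in the b-small part B1 of any cover witnessing a ⋈ b, and those of
   sh_b c in the b-small part B2 of a cover witnessing b ⋈ c.  If b ⋈ d via B ∪ D, then
   a # d yields a point outside A1 ∪ D, i.e. in B1 ∩ B, and c # d a point in B2 ∩ B.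
   Chaining the three b-small sets B1, B, B2 gives Δ_b(sh_b a, sh_b c) ≤ 3, against
   a - b - c (4). *)
From Stdlib Require Import Classical Lia.

Set Implicit Arguments.

Section GraphDistance.
Variables (T : Type) (e : T -> T -> Prop).

Lemma within_mono m n x y : m <= n -> within e m x y -> within e n x y.
Proof.
  intros Hmn H; revert n Hmn; induction H as [m x | m x y z Hxy _ IH]; intros n Hmn.
  - apply within_refl.
  - destruct n as [|n]; [lia|].
    apply within_step with y; [exact Hxy | apply IH; lia].
Qed.

Lemma within_trans m n x y z :
  within e m x y -> within e n y z -> within e (m + n) x z.
Proof.
  intros Hxy Hyz; induction Hxy as [m x | m x w y Hxw _ IH].
  - apply within_mono with n; [lia | exact Hyz].
  - apply within_step with w; auto.
Qed.

Lemma diam_gt_le m n : m <= n -> diam_gt e n -> diam_gt e m.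
Proof.
  intros Hmn [x [y Hxy]]; exists x, y; intro H.
  apply Hxy, within_mono with m; assumption.
Qed.

Lemma small_compl_of_cover {A B : T -> Prop} :
  (forall x, A x \/ B x) -> small e A -> small e (fun x => ~ B x).
Proof.
  intros Hcov HA x y Hx Hy; apply HA.
  - destruct (Hcov x); tauto.
  - destruct (Hcov y); tauto.
Qed.

End GraphDistance.

Section Shadows.
Variable T : Type.
Implicit Types (a b d : T -> T -> Prop) (A B D : T -> Prop).

Lemma linked_gap a d A D :
  linked a d -> small a A -> small d D -> exists x, ~ A x /\ ~ D x.
Proof.
  intros Had HA HD; apply NNPP; intro Hno.
  apply Had; exists A, D; repeat split; auto.
  intro x; apply NNPP; intro Hx; apply Hno; exists x; tauto.
Qed.

Lemma sh_sub a b B x :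
  small b B -> small a (fun y => ~ B y) -> sh b a x -> B x.
Proof. intros HB HBc Hx; exact (Hx B HB HBc). Qed.

Lemma not_sh a b x :
  ~ sh b a x -> exists B, small b B /\ small a (fun y => ~ B y) /\ ~ B x.
Proof.
  intro Hx; apply NNPP; intro Hno; apply Hx; intros B HB HBc.
  apply NNPP; intro HBx; apply Hno; eauto.
Qed.

(* If sh_b a were empty, the two points at a-distance > 2 would be avoided by b-small sets
   X1, X2 with a-small complements; as b # b, some point lies outside X1 ∪ X2. *)
Lemma sh_nonempty a b : linked b b -> diam_gt a 2 -> exists x, sh b a x.
Proof.
  intros Hbb [p [q Hpq]]; apply NNPP; intro Hno.
  assert (Hempty : forall x, ~ sh b a x) by (intros x Hx; apply Hno; eauto).
  destruct (not_sh (Hempty p)) as [X1 [HX1 [HX1c Hp]]].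
  destruct (not_sh (Hempty q)) as [X2 [HX2 [HX2c Hq]]].
  destruct (linked_gap Hbb HX1 HX2) as [m [Hm1 Hm2]].
  apply Hpq; change 2 with (1 + 1).
  apply within_trans with m; [apply HX1c | apply HX2c]; assumption.
Qed.

End Shadows.

Theorem lemma3p3 (T : Type) (tau : topology T)
  (Hcomp : compact tau) (Hhaus : hausdorff tau)
  (a b c d : T -> T -> Prop)
  (Ha : standing tau a) (Hb : standing tau b)
  (Hc : standing tau c) (Hd : standing tau d) :
  chain3 a b c 4 -> linked a d -> linked c d -> linked b d.
Proof.
  intros [[A1 [B1 [Hcov1 [HA1 HB1]]]] [[B2 [C2 [Hcov2 [HB2 HC2]]]] Hfar]] Had Hcd.
  intros [B [D [Hcov [HB HD]]]].
  destruct Ha as [_ [_ Hdiam_a]], Hb as [_ [Hbb _]], Hc as [_ [_ Hdiam_c]].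
  destruct (sh_nonempty Hbb (diam_gt_le (ltac:(lia) : 2 <= 4) Hdiam_a)) as [x Hx].
  destruct (sh_nonempty Hbb (diam_gt_le (ltac:(lia) : 2 <= 4) Hdiam_c)) as [y Hy].
  assert (HxB1 : B1 x) by exact (sh_sub HB1 (small_compl_of_cover Hcov1 HA1) Hx).
  assert (HyB2 : B2 y).
  { assert (Hcov2' : forall z, C2 z \/ B2 z) by (intro z; destruct (Hcov2 z); tauto).
    exact (sh_sub HB2 (small_compl_of_cover Hcov2' HC2) Hy). }
  destruct (linked_gap Had HA1 HD) as [p [Hp1 Hp]].
  destruct (linked_gap Hcd HC2 HD) as [q [Hq2 Hq]].
  assert (HpB1 : B1 p) by (destruct (Hcov1 p); tauto).
  assert (HqB2 : B2 q) by (destruct (Hcov2 q); tauto).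
  assert (HpqB : B p /\ B q) by (destruct (Hcov p), (Hcov q); tauto).
  apply (Hfar x y Hx Hy), within_mono with (1 + (1 + 1)); [lia|].
  apply within_trans with p; [apply HB1; assumption|].
  apply within_trans with q; [apply HB; tauto | apply HB2; assumption].
Qed.
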